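(* Let $I$ be an index set. For each $i\in I$ let $(X_i,\le_i)$ be a poset and $E_i$ an equivalence relation on $X_i$ with ${\le_i}\subseteq E_i$, and assume $X_i\cap X_j=\varnothing$ for $i\ne j$. Suppose that for each $i\in I$, $\alpha_i:X_i\to X_i$ is an order automorphism of $(X_i,\le_i)$ and $\beta_i:X_i\to X_i$ is a self-inverse dual order automorphism of $(X_i,\le_i)$ with $\alpha_i,\beta_i\subseteq E_i$ and $\beta_i=\alpha_i\circ\beta_i\circ\alpha_i$. Let $X=\bigcup_iX_i$, ${\le}=\bigcup_i{\le_i}$, $E=\bigcup_iE_i$, $\alpha=\bigcup_i\alpha_i$ and $\beta=\bigcup_i\beta_i$ (so $\alpha(x)=\alpha_i(x)$ and $\beta(x)=\beta_i(x)$ for $x\in X_i$). Then: (i) $(X,\le)$ is a poset and $E$ is an equivalence relation on $X$ with ${\le}\subseteq E$; (ii) $\alpha$ is an order automorphism of $(X,\le)$ with $\alpha\subseteq E$; (iii) $\beta$ is a self-inverse dual order automorphism of $(X,\le)$ with $\beta\subseteq E$; (iv) $\beta=\alpha\circ\beta\circ\alpha$; (v) $\mathbf{Dq}(\mathbf E)\cong\prod_{i\in I}\mathbf{Dq}(\mathbf E_i)$.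
   Context: For binary relations: converse $R^\smile$; composition $R\circ S=\{(x,y)\mid\exists z\,((x,z)\in R,(z,y)\in S)\}$. Functions are identified with their graphs. Order automorphism: bijection with $x\le y\iff\alpha(x)\le\alpha(y)$; dual order automorphism: bijection with $x\le y\iff\beta(y)\le\beta(x)$; self-inverse: $\beta\circ\beta=\mathrm{id}$. Given a poset $(Y,\le)$, an equivalence relation $F\supseteq{\le}$ on $Y$, and such $\alpha,\beta\subseteq F$ with $\beta=\alpha\circ\beta\circ\alpha$: $F$ is ordered by $(u,v)\preceq(x,y)$ iff $x\le u$ and $v\le y$, $\mathbf F=(F,\preceq)$; complements are $R^c=F\setminus R$; and $\mathbf{Dq}(\mathbf F)$ is the algebra $\langle\mathsf{Up}(\mathbf F),\cap,\cup,\circ,1,0,{\sim},-,'\rangle$ of up-sets of $\mathbf F$ with $1={\le}$, $0=\alpha\circ({\le}^c)^\smile$, ${\sim}R=(R^\smile\circ0^c)^c$, $-R=(0^c\circ R^\smile)^c$, $R'=\alpha\circ\beta\circ R^c\circ\beta$ (a distributive quasi relation algebra). Here $\mathbf{Dq}(\mathbf E_i)$ is formed with $\le_i,\alpha_i,\beta_i$, and $\mathbf{Dq}(\mathbf E)$ with $\le,\alpha,\beta$. *)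

(* Plain Rocq (no library needed): binary relations on an ambient type T,
   functions identified with their graphs, as in the paper. *)

Definition rel (T : Type) := T -> T -> Prop.

Section Rel.
Variable T : Type.

Definition releq (R S : rel T) : Prop := forall x y, R x y <-> S x y.
Definition subrel (R S : rel T) : Prop := forall x y, R x y -> S x y.

Definition rconv (R : rel T) : rel T := fun x y => R y x.
Definition rcomp (R S : rel T) : rel T := fun x y => exists z, R x z /\ S z y.
Definition rcap (R S : rel T) : rel T := fun x y => R x y /\ S x y.
Definition rcup (R S : rel T) : rel T := fun x y => R x y \/ S x y.
Definition rid (X : T -> Prop) : rel T := fun x y => X x /\ x = y.

Definition is_poset (X : T -> Prop) (le : rel T) : Prop :=
  (forall x y, le x y -> X x /\ X y) /\
  (forall x, X x -> le x x) /\
  (forall x y, le x y -> le y x -> x = y) /\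
  (forall x y z, le x y -> le y z -> le x z).

Definition is_equiv_on (X : T -> Prop) (E : rel T) : Prop :=
  (forall x y, E x y -> X x /\ X y) /\
  (forall x, X x -> E x x) /\
  (forall x y, E x y -> E y x) /\
  (forall x y z, E x y -> E y z -> E x z).

Definition is_fun_on (X : T -> Prop) (f : rel T) : Prop :=
  (forall x y, f x y -> X x /\ X y) /\
  (forall x, X x -> exists y, f x y /\ forall y', f x y' -> y' = y).

Definition is_bij_on (X : T -> Prop) (f : rel T) : Prop :=
  is_fun_on X f /\
  (forall y, X y -> exists x, f x y /\ forall x', f x' y -> x' = x).

Definition order_aut (X : T -> Prop) (le : rel T) (f : rel T) : Prop :=
  is_bij_on X f /\
  (forall x y fx fy, f x fx -> f y fy -> (le x y <-> le fx fy)).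

Definition dual_order_aut (X : T -> Prop) (le : rel T) (f : rel T) : Prop :=
  is_bij_on X f /\
  (forall x y fx fy, f x fx -> f y fy -> (le x y <-> le fy fx)).

Definition self_inverse (X : T -> Prop) (f : rel T) : Prop :=
  releq (rcomp f f) (rid X).

Definition rcompl (F R : rel T) : rel T := fun x y => F x y /\ ~ R x y.

(* up-sets of (F, \preceq) where (u,v) \preceq (x,y) iff x <= u and v <= y *)
Definition is_upset (le F R : rel T) : Prop :=
  subrel R F /\
  (forall u v x y, R u v -> le x u -> le v y -> F x y -> R x y).

Definition Dq_one (le : rel T) : rel T := le.
Definition Dq_zero (le alpha F : rel T) : rel T :=
  rcomp alpha (rconv (rcompl F le)).
Definition Dq_tilde (le alpha F R : rel T) : rel T :=
  rcompl F (rcomp (rconv R) (rcompl F (Dq_zero le alpha F))).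
Definition Dq_minus (le alpha F R : rel T) : rel T :=
  rcompl F (rcomp (rcompl F (Dq_zero le alpha F)) (rconv R)).
Definition Dq_prime (alpha beta F R : rel T) : rel T :=
  rcomp alpha (rcomp beta (rcomp (rcompl F R) beta)).

End Rel.

Arguments releq {T}. Arguments subrel {T}. Arguments rconv {T}.
Arguments rcomp {T}. Arguments rcap {T}. Arguments rcup {T}. Arguments rid {T}.
Arguments is_poset {T}. Arguments is_equiv_on {T}. Arguments is_fun_on {T}.
Arguments is_bij_on {T}. Arguments order_aut {T}. Arguments dual_order_aut {T}.
Arguments self_inverse {T}. Arguments rcompl {T}. Arguments is_upset {T}.
Arguments Dq_one {T}. Arguments Dq_zero {T}. Arguments Dq_tilde {T}.
Arguments Dq_minus {T}. Arguments Dq_prime {T}.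

(* Dq(F) for the data (le, alpha, beta, F) is isomorphic to the product over
   i : I of Dq(F_i) for the data (le_i, alpha_i, beta_i, F_i):
   there is a map phi from up-sets of F to I-indexed families that sends
   up-sets to families of up-sets, is a bijection between the two carriers
   (elements compared extensionally as sets of pairs) and preserves
   cap, cup, composition, 1, 0, ~, -, ' (operations of the product computed
   componentwise). *)
Definition Dq_iso_prod {T I : Type}
    (le alpha beta F : rel T)
    (lei alphai betai Fi : I -> rel T) : Prop :=
  exists phi : rel T -> I -> rel T,
    (forall R, is_upset le F R -> forall i, is_upset (lei i) (Fi i) (phi R i)) /\
    (forall R S, is_upset le F R -> is_upset le F S ->
       (forall i, releq (phi R i) (phi S i)) -> releq R S) /\
    (forall G : I -> rel T, (forall i, is_upset (lei i) (Fi i) (G i)) ->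
       exists R, is_upset le F R /\ forall i, releq (phi R i) (G i)) /\
    (forall R S, is_upset le F R -> is_upset le F S -> forall i,
       releq (phi (rcap R S) i) (rcap (phi R i) (phi S i))) /\
    (forall R S, is_upset le F R -> is_upset le F S -> forall i,
       releq (phi (rcup R S) i) (rcup (phi R i) (phi S i))) /\
    (forall R S, is_upset le F R -> is_upset le F S -> forall i,
       releq (phi (rcomp R S) i) (rcomp (phi R i) (phi S i))) /\
    (forall i, releq (phi (Dq_one le) i) (Dq_one (lei i))) /\
    (forall i, releq (phi (Dq_zero le alpha F) i)
                     (Dq_zero (lei i) (alphai i) (Fi i))) /\
    (forall R, is_upset le F R -> forall i,
       releq (phi (Dq_tilde le alpha F R) i)
             (Dq_tilde (lei i) (alphai i) (Fi i) (phi R i))) /\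
    (forall R, is_upset le F R -> forall i,
       releq (phi (Dq_minus le alpha F R) i)
             (Dq_minus (lei i) (alphai i) (Fi i) (phi R i))) /\
    (forall R, is_upset le F R -> forall i,
       releq (phi (Dq_prime alpha beta F R) i)
             (Dq_prime (alphai i) (betai i) (Fi i) (phi R i))).

Definition bigU {T I : Type} (X : I -> T -> Prop) : T -> Prop :=
  fun x => exists i, X i x.
Definition bigUr {T I : Type} (R : I -> rel T) : rel T :=
  fun x y => exists i, R i x y.

From Stdlib Require Import Classical Setoid Morphisms.

(* Because the X_i are pairwise disjoint, any pair related by one of the
   unions lies inside a single block X_i, so each property in (i)-(iv) can be
   checked block by block.  For (v), an up-set R of E is the disjoint union of
   its restrictions R ∩ E_i, which are up-sets of E_i, and restricting to a
   block commutes with intersection, union, converse, complement relative to E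
   and (for R ⊆ E) composition, hence with every operation of Dq. *)

Definition rel_on {T : Type} (X : T -> Prop) (R : rel T) : Prop :=
  forall x y, R x y -> X x /\ X y.

Section RelationAlgebra.
Context {T : Type}.
Implicit Types (X : T -> Prop) (R S F : rel T).

Lemma releq_refl R : releq R R.
Proof. now intros x y. Qed.

Lemma releq_sym R S : releq R S -> releq S R.
Proof. intros H x y; symmetry; apply H. Qed.

Lemma releq_trans R S U : releq R S -> releq S U -> releq R U.
Proof. intros H1 H2 x y; rewrite (H1 x y); apply H2. Qed.

Lemma rel_on_rconv {X R} : rel_on X R -> rel_on X (rconv R).
Proof. intros H x y Hxy; destruct (H y x Hxy); split; assumption. Qed.

Lemma rel_on_rcomp {X R S} : rel_on X R -> rel_on X S -> rel_on X (rcomp R S).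
Proof.
  intros HR HS x y (z & Hxz & Hzy).
  split; [apply (HR x z Hxz) | apply (HS z y Hzy)].
Qed.

Lemma rcompl_subrel F R : subrel (rcompl F R) F.
Proof. now intros x y [H _]. Qed.

End RelationAlgebra.

Add Parametric Relation (T : Type) : (rel T) (@releq T)
  reflexivity proved by (@releq_refl T)
  symmetry proved by (@releq_sym T)
  transitivity proved by (@releq_trans T)
  as releq_setoid.

#[export] Instance rcomp_proper (T : Type) :
  Proper (releq ==> releq ==> releq) (@rcomp T).
Proof.
  intros R R' HR S S' HS x y; split; intros (z & Hxz & Hzy); exists z;
    split; [apply HR | apply HS | apply HR | apply HS]; assumption.
Qed.

#[export] Instance rconv_proper (T : Type) : Proper (releq ==> releq) (@rconv T).
Proof. intros R R' HR x y; apply HR. Qed.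

#[export] Instance rcompl_proper (T : Type) (F : rel T) :
  Proper (releq ==> releq) (rcompl F).
Proof. intros R R' HR x y; unfold rcompl; now rewrite (HR x y). Qed.

Section DisjointUnion.
Context {T I : Type} {X : I -> T -> Prop}.
Hypothesis X_disjoint : forall i j x, i <> j -> X i x -> X j x -> False.

Lemma subrel_bigUr {R S : I -> rel T} :
  (forall i, subrel (R i) (S i)) -> subrel (bigUr R) (bigUr S).
Proof. intros H x y [i Hxy]; exists i; now apply H. Qed.

Lemma bigUr_releq {R S : I -> rel T} :
  (forall i, releq (R i) (S i)) -> releq (bigUr R) (bigUr S).
Proof. intros H x y; split; intros [i Hxy]; exists i; now apply H. Qed.

Lemma rel_on_bigUr {R : I -> rel T} :
  (forall i, rel_on (X i) (R i)) -> rel_on (bigU X) (bigUr R).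
Proof.
  intros H x y [i Hxy]; destruct (H i x y Hxy).
  split; exists i; assumption.
Qed.

Lemma block_unique {i j : I} {x : T} : X i x -> X j x -> i = j.
Proof.
  intros Hi Hj; apply NNPP; intros Hij.
  exact (X_disjoint i j x Hij Hi Hj).
Qed.

Lemma bigUr_blockl {R : I -> rel T} (R_on : forall i, rel_on (X i) (R i))
  {i : I} {x y : T} : X i x -> bigUr R x y -> R i x y.
Proof.
  intros Xx [j Hxy].
  now rewrite (block_unique Xx (proj1 (R_on j x y Hxy))).
Qed.

Lemma bigUr_blockr {R : I -> rel T} (R_on : forall i, rel_on (X i) (R i))
  {i : I} {x y : T} : X i y -> bigUr R x y -> R i x y.
Proof.
  intros Xy [j Hxy].
  now rewrite (block_unique Xy (proj2 (R_on j x y Hxy))).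
Qed.

Lemma is_poset_bigUr (le : I -> rel T) :
  (forall i, is_poset (X i) (le i)) -> is_poset (bigU X) (bigUr le).
Proof.
  intros Hle.
  assert (le_on : forall i, rel_on (X i) (le i)) by (intro i; exact (proj1 (Hle i))).
  split; [|split; [|split]].
  - exact (rel_on_bigUr le_on).
  - intros x [i Xx]; exists i.
    destruct (Hle i) as (_ & le_refl & _); exact (le_refl x Xx).
  - intros x y [i Hxy] Hyx.
    destruct (Hle i) as (_ & _ & le_anti & _).
    exact (le_anti x y Hxy (bigUr_blockl le_on (proj2 (le_on i x y Hxy)) Hyx)).
  - intros x y z [i Hxy] Hyz; exists i.
    destruct (Hle i) as (_ & _ & _ & le_trans).
    exact (le_trans x y z Hxy (bigUr_blockl le_on (proj2 (le_on i x y Hxy)) Hyz)).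
Qed.

Lemma is_equiv_on_bigUr (E : I -> rel T) :
  (forall i, is_equiv_on (X i) (E i)) -> is_equiv_on (bigU X) (bigUr E).
Proof.
  intros HE.
  assert (E_on : forall i, rel_on (X i) (E i)) by (intro i; exact (proj1 (HE i))).
  split; [|split; [|split]].
  - exact (rel_on_bigUr E_on).
  - intros x [i Xx]; exists i.
    destruct (HE i) as (_ & E_refl & _); exact (E_refl x Xx).
  - intros x y [i Hxy]; exists i.
    destruct (HE i) as (_ & _ & E_sym & _); exact (E_sym x y Hxy).
  - intros x y z [i Hxy] Hyz; exists i.
    destruct (HE i) as (_ & _ & _ & E_trans).
    exact (E_trans x y z Hxy (bigUr_blockl E_on (proj2 (E_on i x y Hxy)) Hyz)).
Qed.

Lemma is_bij_on_bigUr (f : I -> rel T) :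
  (forall i, is_bij_on (X i) (f i)) -> is_bij_on (bigU X) (bigUr f).
Proof.
  intros Hf.
  assert (f_on : forall i, rel_on (X i) (f i)) by (intro i; exact (proj1 (proj1 (Hf i)))).
  split; [split|].
  - exact (rel_on_bigUr f_on).
  - intros x [i Xx].
    destruct (proj2 (proj1 (Hf i)) x Xx) as (y & Hxy & Huniq).
    exists y; split; [now exists i|].
    intros y' Hxy'; exact (Huniq y' (bigUr_blockl f_on Xx Hxy')).
  - intros y [i Xy].
    destruct (proj2 (Hf i) y Xy) as (x & Hxy & Huniq).
    exists x; split; [now exists i|].
    intros x' Hx'y; exact (Huniq x' (bigUr_blockr f_on Xy Hx'y)).
Qed.

Lemma bigUr_iff_transport (f R S : I -> rel T) :
  (forall i, rel_on (X i) (f i)) ->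
  (forall i, rel_on (X i) (R i)) -> (forall i, rel_on (X i) (S i)) ->
  (forall i x y fx fy, f i x fx -> f i y fy -> (R i x y <-> S i fx fy)) ->
  forall x y fx fy, bigUr f x fx -> bigUr f y fy ->
    (bigUr R x y <-> bigUr S fx fy).
Proof.
  intros f_on R_on S_on Hf x y fx fy [i Hx] [j Hy].
  destruct (f_on i x fx Hx) as [Xx Xfx], (f_on j y fy Hy) as [Xy Xfy].
  split; intros [k Hk].
  - destruct (R_on k x y Hk) as [Xkx Xky].
    pose proof (block_unique Xkx Xx); pose proof (block_unique Xky Xy); subst.
    exists j; now apply (Hf j x y).
  - destruct (S_on k fx fy Hk) as [Xkx Xky].
    pose proof (block_unique Xkx Xfx); pose proof (block_unique Xky Xfy); subst.
    exists j; now apply (Hf j x y fx fy).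
Qed.

Lemma order_aut_bigUr (le f : I -> rel T) :
  (forall i, rel_on (X i) (le i)) -> (forall i, order_aut (X i) (le i) (f i)) ->
  order_aut (bigU X) (bigUr le) (bigUr f).
Proof.
  intros le_on Hf; split.
  - apply is_bij_on_bigUr; intro i; exact (proj1 (Hf i)).
  - apply bigUr_iff_transport; [| exact le_on | exact le_on |].
    + intro i; exact (proj1 (proj1 (proj1 (Hf i)))).
    + intro i; exact (proj2 (Hf i)).
Qed.

Lemma dual_order_aut_bigUr (le f : I -> rel T) :
  (forall i, rel_on (X i) (le i)) -> (forall i, dual_order_aut (X i) (le i) (f i)) ->
  dual_order_aut (bigU X) (bigUr le) (bigUr f).
Proof.
  intros le_on Hf; split.
  - apply is_bij_on_bigUr; intro i; exact (proj1 (Hf i)).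
  - apply (bigUr_iff_transport f le (fun i => rconv (le i))); [| exact le_on | |].
    + intro i; exact (proj1 (proj1 (proj1 (Hf i)))).
    + intro i; exact (rel_on_rconv (le_on i)).
    + intro i; exact (proj2 (Hf i)).
Qed.

Lemma rcomp_bigUr {R S : I -> rel T} :
  (forall i, rel_on (X i) (R i)) -> (forall i, rel_on (X i) (S i)) ->
  releq (rcomp (bigUr R) (bigUr S)) (bigUr (fun i => rcomp (R i) (S i))).
Proof.
  intros R_on S_on x y; split.
  - intros (z & [i Hxz] & Hzy); exists i, z; split; [exact Hxz|].
    exact (bigUr_blockl S_on (proj2 (R_on i x z Hxz)) Hzy).
  - intros [i (z & Hxz & Hzy)]; exists z; split; exists i; assumption.
Qed.

Lemma rid_bigU : releq (bigUr (fun i => rid (X i))) (rid (bigU X)).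
Proof.
  intros x y; split.
  - intros [i [Xx <-]]; split; [now exists i | reflexivity].
  - intros [[i Xx] <-]; now exists i.
Qed.

Lemma self_inverse_bigUr (f : I -> rel T) :
  (forall i, rel_on (X i) (f i)) -> (forall i, self_inverse (X i) (f i)) ->
  self_inverse (bigU X) (bigUr f).
Proof.
  intros f_on Hf; unfold self_inverse.
  rewrite (rcomp_bigUr f_on f_on), <- rid_bigU.
  exact (bigUr_releq Hf).
Qed.

Variable E : I -> rel T.
Hypothesis E_equiv : forall i, is_equiv_on (X i) (E i).

Let E_on i : rel_on (X i) (E i) := proj1 (E_equiv i).
Let E_sym i : forall x y, E i x y -> E i y x := proj1 (proj2 (proj2 (E_equiv i))).
Let E_trans i : forall x y z, E i x y -> E i y z -> E i x z :=
  proj2 (proj2 (proj2 (E_equiv i))).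

Definition block (R : rel T) (i : I) : rel T := rcap R (E i).

Lemma block_rcap R S i : releq (block (rcap R S) i) (rcap (block R i) (block S i)).
Proof. intros x y; unfold block, rcap; tauto. Qed.

Lemma block_rcup R S i : releq (block (rcup R S) i) (rcup (block R i) (block S i)).
Proof. intros x y; unfold block, rcap, rcup; tauto. Qed.

Lemma block_rconv R i : releq (block (rconv R) i) (rconv (block R i)).
Proof. intros x y; split; intros [Hyx Exy]; split; auto. Qed.

Lemma block_rcompl R i :
  releq (block (rcompl (bigUr E) R) i) (rcompl (E i) (block R i)).
Proof.
  intros x y; split.
  - intros [[_ nR] Exy]; split; [exact Exy|]; now intros [Hxy _].
  - intros [Exy nR]; split; [split|exact Exy].
    + now exists i.
    + intros Hxy; exact (nR (conj Hxy Exy)).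
Qed.

(* Only R needs to lie in E: that puts the middle point in the block of x. *)
Lemma block_rcomp R S i : subrel R (bigUr E) ->
  releq (block (rcomp R S) i) (rcomp (block R i) (block S i)).
Proof.
  intros HR x y; split.
  - intros [(z & Hxz & Hzy) Exy].
    assert (Exz : E i x z)
      by exact (bigUr_blockl E_on (proj1 (E_on i x y Exy)) (HR x z Hxz)).
    exists z; split; split; eauto.
  - intros (z & [Hxz Exz] & [Hzy Ezy]); split; [now exists z | eauto].
Qed.

Lemma block_bigUr {G : I -> rel T} i : (forall j, subrel (G j) (E j)) ->
  releq (block (bigUr G) i) (G i).
Proof.
  intros HG x y; split.
  - intros [[j Hxy] Exy].
    destruct (E_on i x y Exy) as [Xx _], (E_on j x y (HG j x y Hxy)) as [Xjx _].
    now rewrite (block_unique Xx Xjx).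
  - intros Hxy; split; [now exists i | exact (HG i x y Hxy)].
Qed.

Lemma bigUr_block {R} : subrel R (bigUr E) -> releq R (bigUr (block R)).
Proof.
  intros HR x y; split.
  - intros Hxy; destruct (HR x y Hxy) as [i Exy]; now exists i.
  - now intros [i [Hxy _]].
Qed.

Lemma subrel_rconv R : subrel R (bigUr E) -> subrel (rconv R) (bigUr E).
Proof.
  intros HR x y Hyx; destruct (HR y x Hyx) as [i Eyx].
  exists i; exact (E_sym i y x Eyx).
Qed.

Context {le alpha beta : I -> rel T}.
Hypothesis le_sub : forall i, subrel (le i) (E i).
Hypothesis alpha_sub : forall i, subrel (alpha i) (E i).
Hypothesis beta_sub : forall i, subrel (beta i) (E i).

Let le_on i : rel_on (X i) (le i) := fun x y Hxy => E_on i x y (le_sub i x y Hxy).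

Lemma block_upset R i :
  is_upset (bigUr le) (bigUr E) R -> is_upset (le i) (E i) (block R i).
Proof.
  intros [_ HR]; split.
  - now intros x y [_ Exy].
  - intros u v x y [Huv _] Hxu Hvy Exy; split; [|exact Exy].
    apply (HR u v); [exact Huv | now exists i | now exists i | now exists i].
Qed.

Lemma upset_bigUr (G : I -> rel T) :
  (forall i, is_upset (le i) (E i) (G i)) -> is_upset (bigUr le) (bigUr E) (bigUr G).
Proof.
  intros HG; split.
  - apply subrel_bigUr; intro i; apply (HG i).
  - intros u v x y [i Huv] Hxu Hvy Exy; exists i.
    destruct (E_on i u v (proj1 (HG i) u v Huv)) as [Xu Xv].
    assert (Hxu' : le i x u) by exact (bigUr_blockr le_on Xu Hxu).
    apply (proj2 (HG i) u v); trivial.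
    + exact (bigUr_blockl le_on Xv Hvy).
    + exact (bigUr_blockl E_on (proj1 (le_on i x u Hxu')) Exy).
Qed.

Lemma block_Dq_zero i :
  releq (block (Dq_zero (bigUr le) (bigUr alpha) (bigUr E)) i)
        (Dq_zero (le i) (alpha i) (E i)).
Proof.
  unfold Dq_zero.
  rewrite block_rcomp, block_rconv, block_rcompl, !block_bigUr by
    first [ assumption | now apply subrel_bigUr ].
  reflexivity.
Qed.

Lemma block_Dq_tilde R i : subrel R (bigUr E) ->
  releq (block (Dq_tilde (bigUr le) (bigUr alpha) (bigUr E) R) i)
        (Dq_tilde (le i) (alpha i) (E i) (block R i)).
Proof.
  intros HR; unfold Dq_tilde.
  rewrite block_rcompl, block_rcomp, block_rconv, block_rcompl, block_Dq_zero
    by now apply subrel_rconv.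
  reflexivity.
Qed.

Lemma block_Dq_minus R i :
  releq (block (Dq_minus (bigUr le) (bigUr alpha) (bigUr E) R) i)
        (Dq_minus (le i) (alpha i) (E i) (block R i)).
Proof.
  unfold Dq_minus.
  rewrite block_rcompl, block_rcomp, block_rconv, block_rcompl, block_Dq_zero
    by apply rcompl_subrel.
  reflexivity.
Qed.

Lemma block_Dq_prime R i :
  releq (block (Dq_prime (bigUr alpha) (bigUr beta) (bigUr E) R) i)
        (Dq_prime (alpha i) (beta i) (E i) (block R i)).
Proof.
  unfold Dq_prime.
  rewrite !block_rcomp, block_rcompl, !block_bigUr by
    first [ assumption | apply rcompl_subrel | now apply subrel_bigUr ].
  reflexivity.
Qed.

Theorem Dq_iso_prod_bigUr :
  Dq_iso_prod (bigUr le) (bigUr alpha) (bigUr beta) (bigUr E) le alpha beta E.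
Proof.
  exists block.
  split; [|split; [|split; [|split; [|split; [|split; [|split; [|split; [|split; [|split]]]]]]]]].
  - intros R HR i; now apply block_upset.
  - intros R S [HR _] [HS _] Hblocks.
    rewrite (bigUr_block HR), (bigUr_block HS).
    exact (bigUr_releq Hblocks).
  - intros G HG; exists (bigUr G); split; [now apply upset_bigUr|].
    intro i; apply block_bigUr; intro j; apply (HG j).
  - intros R S _ _ i; apply block_rcap.
  - intros R S _ _ i; apply block_rcup.
  - intros R S [HR _] _ i; now apply block_rcomp.
  - intro i; exact (block_bigUr i le_sub).
  - exact block_Dq_zero.
  - intros R [HR _] i; now apply block_Dq_tilde.
  - intros R _ i; apply block_Dq_minus.
  - intros R _ i; apply block_Dq_prime.
Qed.

End DisjointUnion.

Theorem theorem4p1 (T I : Type) (X : I -> T -> Prop)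
  (le E alpha beta : I -> rel T)
  (Hposet : forall i, is_poset (X i) (le i))
  (Hequiv : forall i, is_equiv_on (X i) (E i))
  (HleE : forall i, subrel (le i) (E i))
  (Hdisj : forall i j x, i <> j -> X i x -> X j x -> False)
  (Halpha : forall i, order_aut (X i) (le i) (alpha i))
  (Hbeta : forall i, dual_order_aut (X i) (le i) (beta i))
  (Hbeta_inv : forall i, self_inverse (X i) (beta i))
  (HalphaE : forall i, subrel (alpha i) (E i))
  (HbetaE : forall i, subrel (beta i) (E i))
  (Hbab : forall i, releq (beta i) (rcomp (alpha i) (rcomp (beta i) (alpha i)))) :
  let X0 := bigU X in
  let le0 := bigUr le in
  let E0 := bigUr E in
  let alpha0 := bigUr alpha in
  let beta0 := bigUr beta in
  (* (i) *)
  (is_poset X0 le0 /\ is_equiv_on X0 E0 /\ subrel le0 E0) /\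
  (* (ii) *)
  (order_aut X0 le0 alpha0 /\ subrel alpha0 E0) /\
  (* (iii) *)
  (dual_order_aut X0 le0 beta0 /\ self_inverse X0 beta0 /\ subrel beta0 E0) /\
  (* (iv) *)
  releq beta0 (rcomp alpha0 (rcomp beta0 alpha0)) /\
  (* (v) *)
  Dq_iso_prod le0 alpha0 beta0 E0 le alpha beta E.
Proof.
  cbv zeta.
  assert (le_on : forall i, rel_on (X i) (le i)) by (intro i; exact (proj1 (Hposet i))).
  assert (alpha_on : forall i, rel_on (X i) (alpha i))
    by (intro i; exact (proj1 (proj1 (proj1 (Halpha i))))).
  assert (beta_on : forall i, rel_on (X i) (beta i))
    by (intro i; exact (proj1 (proj1 (proj1 (Hbeta i))))).
  split; [split; [|split] | split; [split|split; [split; [|split]|split]]].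
  - now apply is_poset_bigUr.
  - now apply is_equiv_on_bigUr.
  - now apply subrel_bigUr.
  - now apply order_aut_bigUr.
  - now apply subrel_bigUr.
  - now apply dual_order_aut_bigUr.
  - now apply self_inverse_bigUr.
  - now apply subrel_bigUr.
  - rewrite (rcomp_bigUr Hdisj beta_on alpha_on).
    rewrite (rcomp_bigUr Hdisj alpha_on (fun i => rel_on_rcomp (beta_on i) (alpha_on i))).
    exact (bigUr_releq Hbab).
  - exact (Dq_iso_prod_bigUr Hdisj E Hequiv HleE HalphaE HbetaE).
Qed.
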